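(* Let $D$ be a consistent domain, $a$ a sensing action and $(M,s)$ a state such that $a$ is executable in $(M,s)$ and $(M,s)$ is consistency preserving for $a$. Let $(M',s')\in\Phi^s_D(a,(M,s))$. Then: (1) for every $f\in Sensed_D(a)$ and $\ell\in\{f,\neg f\}$, if $(M,s)\models\ell$ then $(M',s')\models\mathbf C_{F_D(a,M,s)}\ell$; (2) for every $f\in Sensed_D(a)$, $(M',s')\models\mathbf C_{P_D(a,M,s)}\big(\mathbf C_{F_D(a,M,s)}f\vee\mathbf C_{F_D(a,M,s)}\neg f\big)$; (3) for every $i\in O_D(a,M,s)$ and every belief formula $\psi$, $(M',s')\models\mathbf B_i\psi$ iff $(M,s)\models\mathbf B_i\psi$.
   Context: Fix a finite set of agents $\mathcal{AG}=\{1,\dots,n\}$, a set $\mathcal F$ of fluents and a set of actions. Belief formulae are built from propositional (fluent) formulae over $\mathcal F$ using $\mathbf B_i\varphi$ ($i\in\mathcal{AG}$), Boolean connectives, and $\mathbf E_\alpha\varphi,\mathbf C_\alpha\varphi$ for nonempty $\alpha\subseteq\mathcal{AG}$. A Kripke structure $M$ has worlds $M[S]$, interpretations $M[\pi](u)\subseteq\mathcal F$, and relations $M[i]\subseteq M[S]\times M[S]$; a state is $(M,s)$ with $s\in M[S]$. Satisfaction: fluent formulae are evaluated in $M[\pi](s)$; $(M,s)\models\mathbf B_i\varphi$ iff $(M,t)\models\varphi$ for all $t$ with $(s,t)\in M[i]$; Boolean connectives as usual; $\mathbf E_\alpha\varphi$ iff $\mathbf B_i\varphi$ for all $i\in\alpha$;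 $\mathbf C_\alpha\varphi$ iff $\mathbf E^k_\alpha\varphi$ for all $k\ge 0$ ($\mathbf E^0_\alpha\varphi=\varphi$, $\mathbf E^{k+1}_\alpha\varphi=\mathbf E_\alpha\mathbf E^k_\alpha\varphi$). A domain $D$ contains for each action $a$ exactly one ''executable $a$ if $\psi$'' ($\psi$ a belief formula; $a$ is executable in $(M,u)$ iff $(M,u)\models\psi$), for sensing actions statements ''$a$ determines $f$'' ($f\in\mathcal F$), with $Sensed_D(a)=\{f\mid$ ''$a$ determines $f$'' $\in D\}$, and observability statements ''$X$ observes $a$ if $\varphi$'', ''$X$ aware\_of $a$ if $\varphi$'' ($X$ agent, $\varphi$ fluent formula). $F_D(a,M,s)$ (full observers) is the set of $X$ with some ''$X$ observes $a$ if $\varphi$'' in $D$ and $(M,s)\models\varphi$; $P_D(a,M,s)$ (partial observers) is defined likewise with ''aware\_of''; $O_D(a,M,s)$ is the set of remaining agents. $D$ is consistent if in particular $F_D(a,M,s)\cap P_D(a,M,s)=\emptyset$ always (and effects of world-altering actions are consistent). Transition $\Phi^s_D$: if $a$ is executable in $(M,s)$, $\Phi^s_D(a,(M,s))=\{(M',s')\}$ built as follows. Let $c$ be a bijection from $M[S]$ onto a set of fresh worlds. $M''$ has worlds $c(u)$ for those $u\in M[S]$ with $a$ executable in $(M,u)$, with interpretation of $c(u)$ equal to $M[\pi](u)$; for $i\in F_D(a,M,s)$, $(c(u),c(v))\in M''[i]$ iff both are worlds of $M''$, $(u,v)\in M[i]$ and $u,v$ agree on every $f\in Sensed_D(a)$;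 for $i\in P_D(a,M,s)$, $(c(u),c(v))\in M''[i]$ iff both are worlds of $M''$ and $(u,v)\in M[i]$; for $i\in O_D(a,M,s)$, $M''[i]=\emptyset$. Then $M'[S]=M[S]\cup M''[S]$ with interpretations inherited; $M'[i]=M[i]\cup M''[i]$ for $i\in F_D(a,M,s)\cup P_D(a,M,s)$; $M'[i]=M[i]\cup\{(c(u),v)\mid c(u)\in M''[S],(u,v)\in M[i]\}$ for $i\in O_D(a,M,s)$; and $s'=c(s)$. $(M,s)$ is consistency preserving for the sensing action $a$ if $(M,u)\not\models\mathbf B_if\vee\mathbf B_i\neg f$ for every $u\in M[S]$, every $i\in F_D(a,M,s)\cup P_D(a,M,s)$ and every $f\in Sensed_D(a)$. *)

From mathcomp Require Import all_boot.
Set Implicit Arguments. Unset Strict Implicit. Unset Printing Implicit Defensive.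

Section Defs.
Variables (F : eqType) (AG : finType) (A : eqType).

Inductive fform : Type :=
| FAtom of F
| FTrue
| FNot of fform
| FAnd of fform & fform
| FOr of fform & fform.

Fixpoint feval (I : F -> bool) (p : fform) : bool :=
  match p with
  | FAtom f => I f
  | FTrue => true
  | FNot q => ~~ feval I q
  | FAnd q r => feval I q && feval I r
  | FOr q r => feval I q || feval I r
  end.

Inductive bform : Type :=
| BFl of fform
| BNot of bform
| BAnd of bform & bform
| BOr of bform & bform
| BB of AG & bform
| BE of {set AG} & bform
| BC of {set AG} & bform.

Record kripke (W : Type) := Kripke {
  kS : W -> Prop;
  kpi : W -> F -> bool;
  kR : AG -> W -> W -> Prop
}.

Definition kwf W (M : kripke W) : Prop :=
  forall i u v, kR M i u v -> kS M u /\ kS M v.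

(* (M,u) |= E^k_alpha phi, given the truth set P of phi *)
Fixpoint satEk W (M : kripke W) (alpha : {set AG}) (P : W -> Prop) (k : nat) (u : W)
  : Prop :=
  match k with
  | 0 => P u
  | k.+1 => forall i, i \in alpha -> forall t, kR M i u t -> satEk M alpha P k t
  end.

Fixpoint sat W (M : kripke W) (u : W) (phi : bform) {struct phi} : Prop :=
  match phi with
  | BFl p => feval (kpi M u) p
  | BNot q => ~ sat M u q
  | BAnd q r => sat M u q /\ sat M u r
  | BOr q r => sat M u q \/ sat M u r
  | BB i q => forall t, kR M i u t -> sat M t q
  | BE alpha q => forall i, i \in alpha -> forall t, kR M i u t -> sat M t q
  | BC alpha q => forall k, satEk M alpha (fun t => sat M t q) k u
  end.

Record domain := Domain {
  d_exec : A -> bform;                 (* "executable a if psi" (exactly one per a) *)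
  d_determines : seq (A * F);
  d_observes : seq (AG * A * fform);
  d_aware : seq (AG * A * fform)
}.

Definition executable (D : domain) W (M : kripke W) (a : A) (u : W) : Prop :=
  sat M u (d_exec D a).

Definition Sensed (D : domain) (a : A) : seq F :=
  [seq p.2 | p <- d_determines D & p.1 == a].

Definition is_sensing (D : domain) (a : A) : Prop := exists f, f \in Sensed D a.

Definition FD (D : domain) (a : A) W (M : kripke W) (s : W) : {set AG} :=
  [set X | has (fun st : AG * A * fform =>
                  [&& st.1.1 == X, st.1.2 == a & feval (kpi M s) st.2]) (d_observes D)].

Definition PD (D : domain) (a : A) W (M : kripke W) (s : W) : {set AG} :=
  [set X | has (fun st : AG * A * fform =>
                  [&& st.1.1 == X, st.1.2 == a & feval (kpi M s) st.2]) (d_aware D)].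

Definition OD (D : domain) (a : A) W (M : kripke W) (s : W) : {set AG} :=
  ~: (FD D a M s :|: PD D a M s).

Definition consistent_domain (D : domain) : Prop :=
  forall (a : A) (W : Type) (M : kripke W) (s : W),
    [disjoint FD D a M s & PD D a M s].

Definition consistency_preserving (D : domain) (a : A) W (M : kripke W) (s : W) : Prop :=
  forall u, kS M u -> forall i, i \in FD D a M s :|: PD D a M s ->
  forall f, f \in Sensed D a ->
    ~ sat M u (BOr (BB i (BFl (FAtom f))) (BB i (BFl (FNot (FAtom f))))).

(* Transition Phi^s_D for a sensing action.  The fresh copy c(u) of a world u
   is represented as [inr u]; the old worlds are [inl u]. *)
Definition new_world (D : domain) (a : A) W (M : kripke W) (u : W) : Prop :=
  kS M u /\ executable D M a u.

Definition agree_sensed (D : domain) (a : A) W (M : kripke W) (u v : W) : Prop :=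
  forall f, f \in Sensed D a -> kpi M u f = kpi M v f.

Definition trans_model (D : domain) (a : A) W (M : kripke W) (s : W) : kripke (W + W) :=
  {| kS := fun x => match x with
                    | inl u => kS M u
                    | inr u => new_world D a M u
                    end;
     kpi := fun x => match x with inl u => kpi M u | inr u => kpi M u end;
     kR := fun i x y =>
       match x, y with
       | inl u, inl v => kR M i u v
       | inr u, inr v =>
           new_world D a M u /\ new_world D a M v /\ kR M i u v /\
           (i \in FD D a M s -> agree_sensed D a M u v) /\
           (i \in FD D a M s :|: PD D a M s)
       | inr u, inl v =>
           new_world D a M u /\ kR M i u v /\ i \in OD D a M s
       | inl _, inr _ => False
       end |}.

Definition Phi (D : domain) (a : A) W (M : kripke W) (s : W) (M' : kripke (W + W)) (s' : W + W)
  : Prop :=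
  executable D M a s /\ M' = trans_model D a M s /\ s' = inr s.

End Defs.

From mathcomp Require Import all_boot.

Set Implicit Arguments.
Unset Strict Implicit.
Unset Printing Implicit Defensive.

(* The old worlds of the updated model form a generated submodel isomorphic to
   [M], so they satisfy the same formulae; this gives (3), since an oblivious
   agent's edges from the copy [c(s)] lead exactly to the old successors of [s].
   For (1) and (2), common belief is established by an invariant closed under
   the relevant edges: edges of full or partial observers never leave the copy,
   and those of full observers moreover preserve the sensed fluents. *)

Lemma satEk_invariant (F : eqType) (AG : finType) (W : Type) (M : kripke F AG W)
    (alpha : {set AG}) (Q P : W -> Prop) :
  (forall i u t, i \in alpha -> Q u -> kR M i u t -> Q t) ->
  (forall u, Q u -> P u) ->
  forall k u, Q u -> satEk M alpha P k u.
Proof.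
move=> closedQ QP; elim=> [|k IHk] u Qu /=; first exact: QP.
by move=> i alpha_i t Rut; apply: IHk; apply: closedQ Rut.
Qed.

Lemma sat_BC_invariant (F : eqType) (AG : finType) (W : Type) (M : kripke F AG W)
    (alpha : {set AG}) (Q : W -> Prop) (phi : bform F AG) :
  (forall i u t, i \in alpha -> Q u -> kR M i u t -> Q t) ->
  (forall u, Q u -> sat M u phi) ->
  forall u, Q u -> sat M u (BC alpha phi).
Proof. by move=> closedQ Qphi u Qu k; apply: satEk_invariant Qu. Qed.

Lemma feval_literal_agree (F : eqType) (f : F) (l : fform F) (I J : F -> bool) :
  l = FAtom f \/ l = FNot (FAtom f) -> I f = J f -> feval I l = feval J l.
Proof. by case=> -> /= ->. Qed.

Section TransModel.
Variables (F : eqType) (AG : finType) (A : eqType).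
Variables (D : domain F AG A) (a : A) (W : Type) (M : kripke F AG W) (s : W).

Local Notation M' := (trans_model D a M s).
Local Notation FDs := (FD D a M s).
Local Notation PDs := (PD D a M s).
Local Notation ODs := (OD D a M s).

Lemma FD_notin_OD i : i \in FDs -> i \notin ODs.
Proof. by move=> Fi; rewrite in_setC in_setU Fi. Qed.

Lemma PD_notin_OD i : i \in PDs -> i \notin ODs.
Proof. by move=> Pi; rewrite in_setC in_setU Pi orbT. Qed.

Lemma satEk_trans_inl (alpha : {set AG}) (P' : W + W -> Prop) (P : W -> Prop) :
  (forall v, P' (inl v) <-> P v) ->
  forall k u, satEk M' alpha P' k (inl u) <-> satEk M alpha P k u.
Proof.
move=> P'P; elim=> [|k IHk] u /=; first exact: P'P.
split=> H i alpha_i t.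
- by move=> Rut; apply/IHk; apply: (H i alpha_i (inl t)).
- by case: t => // t Rut; apply/IHk; apply: H Rut.
Qed.

Lemma sat_trans_inl psi u : sat M' (inl u) psi <-> sat M u psi.
Proof.
elim: psi u => [p|q IHq|q IHq r IHr|q IHq r IHr|j q IHq|al q IHq|al q IHq] u /=.
- by [].
- by split=> nq /IHq.
- by split=> [[/IHq q_u /IHr r_u] | [/IHq q_u /IHr r_u]].
- by split=> [[/IHq|/IHr]|[/IHq|/IHr]]; auto.
- split=> H t.
  + by move=> Rut; apply/IHq; apply: (H (inl t)).
  + by case: t => // t Rut; apply/IHq; apply: H.
- split=> H i al_i t.
  + by move=> Rut; apply/IHq; apply: (H i al_i (inl t)).
  + by case: t => // t Rut; apply/IHq; apply: H Rut.
- have IHk := @satEk_trans_inl al (fun t => sat M' t q) _ (fun v => IHq v).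
  by split=> H k; apply/IHk.
Qed.

Lemma trans_inr_succ i u y :
  i \notin ODs -> kR M' i (inr u) y ->
  exists2 v, y = inr v & (i \in FDs -> agree_sensed D a M u v).
Proof.
move=> notOi; case: y => [v [_ [_ Oi]] | v [_ [_ [_ [agree _]]]]].
  by rewrite Oi in notOi.
by exists v.
Qed.

Lemma trans_OD_succ i u y :
  i \in ODs -> new_world D a M u ->
  kR M' i (inr u) y <-> exists2 v, y = inl v & kR M i u v.
Proof.
move=> Oi new_u; split.
- case: y => [v [_ [Ruv _]] | v [_ [_ [_ [_ FPi]]]]]; first by exists v.
  by move: Oi; rewrite inE FPi.
- by case=> v -> Ruv.
Qed.

Lemma sat_trans_CF_literal f l u :
  f \in Sensed D a -> l = FAtom f \/ l = FNot (FAtom f) ->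
  sat M u (BFl AG l) -> sat M' (inr u) (BC FDs (BFl AG l)).
Proof.
move=> sensed_f lit_l l_u.
apply: (sat_BC_invariant (Q := fun y => exists2 v, y = inr v & sat M v (BFl AG l)));
  last by exists u.
- move=> i _ t Fi [v -> l_v] Rvt.
  have [w -> agree] := trans_inr_succ (FD_notin_OD Fi) Rvt.
  by exists w => //=; rewrite -(feval_literal_agree lit_l (agree Fi f sensed_f)).
- by move=> _ [v -> l_v].
Qed.

Lemma sat_trans_CP_sensed f u :
  f \in Sensed D a ->
  sat M' (inr u) (BC PDs (BOr (BC FDs (BFl AG (FAtom f)))
                              (BC FDs (BFl AG (FNot (FAtom f)))))).
Proof.
move=> sensed_f.
apply: (sat_BC_invariant (Q := fun y => exists v, y = inr v)); last by exists u.
- move=> i _ t Pi [v ->] Rvt.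
  by have [w -> _] := trans_inr_succ (PD_notin_OD Pi) Rvt; exists w.
- move=> _ [v ->]; case f_v: (kpi M v f).
  + by left; apply: (sat_trans_CF_literal sensed_f); [left | rewrite /= f_v].
  + by right; apply: (sat_trans_CF_literal sensed_f); [right | rewrite /= f_v].
Qed.

Lemma sat_trans_OD_BB i psi u :
  i \in ODs -> new_world D a M u ->
  sat M' (inr u) (BB i psi) <-> sat M u (BB i psi).
Proof.
move=> Oi new_u; split=> H t.
- move=> Rut; apply/sat_trans_inl; apply: H.
  by apply/(trans_OD_succ _ Oi new_u); exists t.
- by move=> /(trans_OD_succ _ Oi new_u) [v -> Ruv]; apply/sat_trans_inl; apply: H.
Qed.

End TransModel.

Theorem proposition3 (F : eqType) (AG : finType) (A : eqType)
  (D : domain F AG A) (a : A) (W : Type) (M : kripke F AG W) (s : W)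
  (M' : kripke F AG (W + W)) (s' : W + W) :
  kwf M -> kS M s ->
  consistent_domain D ->
  is_sensing D a ->
  executable D M a s ->
  consistency_preserving D a M s ->
  Phi D a M s M' s' ->
  (* (1) *)
  (forall f, f \in Sensed D a ->
     forall l, l = FAtom f \/ l = FNot (FAtom f) ->
       sat M s (BFl AG l) -> sat M' s' (BC (FD D a M s) (BFl AG l))) /\
  (* (2) *)
  (forall f, f \in Sensed D a ->
     sat M' s' (BC (PD D a M s)
                  (BOr (BC (FD D a M s) (BFl AG (FAtom f)))
                       (BC (FD D a M s) (BFl AG (FNot (FAtom f))))))) /\
  (* (3) *)
  (forall i, i \in OD D a M s ->
     forall psi, sat M' s' (BB i psi) <-> sat M s (BB i psi)).
Proof.
move=> _ S_s _ _ exec_s _ [_ [-> ->]].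
have new_s : new_world D a M s by split.
split; [|split].
- by move=> f sensed_f l lit_l; apply: sat_trans_CF_literal sensed_f lit_l.
- by move=> f sensed_f; apply: sat_trans_CP_sensed.
- by move=> i Oi psi; apply: sat_trans_OD_BB Oi new_s.
Qed.
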